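(* Consider the protocol $P_{RL}$ with parameter $N$ on a directed ring of size $n$ with $2\le n\le N$. Let $\mathcal{S}_{RL}$ be the set of configurations in $\mathcal{C}_{NI}$ (defined in the context) in which exactly one agent is a leader. Then $\mathcal{S}_{RL}$ is closed (no configuration outside $\mathcal{S}_{RL}$ is reachable from a configuration in $\mathcal{S}_{RL}$), and every configuration in $\mathcal{S}_{RL}$ is safe.
   Context: Model. A population is a directed ring of $n\ge 2$ anonymous agents $u_0,\dots,u_{n-1}$ (indices modulo $n$) with arcs $e_i=(u_i,u_{i+1})$. A configuration $C$ assigns a state to each agent; $C\to C'$ means that $C'$ is obtained from $C$ by one interaction on some arc $e_i$, in which initiator $u_i$ and responder $u_{i+1}$ update their states by the transition function and all other agents keep their states. A configuration is reachable from $C$ if it is obtained from $C$ by finitely many such steps. A configuration $C$ is safe if (i) exactly one agent outputs $L$ and all others output $F$ in $C$, and (ii) in every configuration reachable from $C$ each agent has the same output as in $C$. Protocol $P_{RL}$ (parameter $N$). Each agent has variables $\mathit{leader}\in\{0,1\}$, $\mathit{bullet}\in\{0,1,2\}$, $\mathit{shield}\in\{0,1\}$, $\mathit{signal}\in\{0,1\}$, $\mathit{dist}\in\{0,\dots,N\}$; it outputs $L$ if $\mathit{leader}=1$ (leader) and $F$ otherwise (follower). In an interaction with initiator $l$ and responder $r$ the following are executed in order: 1. If $l.\mathit{leader}=1$ then $l.\mathit{dist}\gets 0$. 2. If $r.\mathit{leader}=1$ then $r.\mathit{dist}\gets 0$; else if $r.\mathit{bullet}=0$ then $r.\mathit{dist}\gets\min(l.\mathit{dist}+1,N)$.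 3. If $r.\mathit{dist}=N$ then $r.\mathit{leader}\gets1$, $r.\mathit{bullet}\gets2$, $r.\mathit{shield}\gets1$, $r.\mathit{signal}\gets0$, $r.\mathit{dist}\gets0$. 4. If $l.\mathit{leader}=1$ and $l.\mathit{signal}=1$ then $l.\mathit{bullet}\gets2$, $l.\mathit{shield}\gets1$, $l.\mathit{signal}\gets0$. 5. If $r.\mathit{leader}=1$ and $r.\mathit{signal}=1$ then $r.\mathit{bullet}\gets1$, $r.\mathit{shield}\gets0$, $r.\mathit{signal}\gets0$. 6. If $l.\mathit{bullet}>0$ and $r.\mathit{leader}=1$: set $r.\mathit{leader}\gets0$ if ($l.\mathit{bullet}=2$ and $r.\mathit{shield}=0$); then $l.\mathit{bullet}\gets0$. Else, if $l.\mathit{bullet}>0$ and $r.\mathit{leader}=0$: if $r.\mathit{bullet}=0$ then $r.\mathit{bullet}\gets l.\mathit{bullet}$; then $l.\mathit{bullet}\gets0$ and $r.\mathit{signal}\gets0$. 7. $l.\mathit{signal}\gets\max(l.\mathit{signal},r.\mathit{signal},r.\mathit{leader})$. Definitions (in a configuration with at least one leader). $\mathrm{dist}_L(i)=\min\{j\ge0: u_{i-j}.\mathit{leader}=1\}$ and $\mathrm{dist}_R(i)=\min\{j\ge0: u_{i+j}.\mathit{leader}=1\}$. $\mathrm{peaceful}(i)$ holds iff $u_{i-\mathrm{dist}_L(i)}.\mathit{shield}=1$ and $u_{i-j}.\mathit{signal}=0$ for all $0\le j\le\mathrm{dist}_L(i)$. $\mathrm{modest}(i)$ holds iff $\mathrm{peaceful}(i)$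 holds and $u_{i-j}.\mathit{dist}\le\mathrm{dist}_L(i-j)$ for all $0\le j\le\mathrm{dist}_L(i)$. $\mathrm{secure}(i)$ holds iff $u_i.\mathit{dist}=0$ when $u_i.\mathit{leader}=1$, and $u_i.\mathit{dist}\le N-\mathrm{dist}_R(i)$ when $u_i.\mathit{leader}=0$. $\mathcal{C}_{PB}$ is the set of configurations with at least one leader in which every $u_j$ with $u_j.\mathit{bullet}=2$ satisfies $\mathrm{peaceful}(j)$. $\mathcal{C}_{NI}$ is the set of configurations in $\mathcal{C}_{PB}$ in which every agent $u_i$ satisfies $\mathrm{secure}(i)$ and every $u_j$ with $u_j.\mathit{bullet}=2$ satisfies $\mathrm{modest}(j)$. *)

From mathcomp Require Import all_boot.
Set Implicit Arguments. Unset Strict Implicit. Unset Printing Implicit Defensive.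

Section Protocol.
Variable N : nat.

(* Agent state: leader, shield, signal in {0,1} (as bool, 1 = true);
   bullet in {0,1,2} ('I_3); dist in {0,...,N} ('I_N.+1). *)
Record St := mkSt {
  leader : bool; bullet : 'I_3; shield : bool; signal : bool; dist : 'I_N.+1 }.

Definition set_dist (s : St) (d : 'I_N.+1) : St :=
  mkSt (leader s) (bullet s) (shield s) (signal s) d.
Definition set_leader (s : St) (b : bool) : St :=
  mkSt b (bullet s) (shield s) (signal s) (dist s).
Definition set_bullet (s : St) (b : 'I_3) : St :=
  mkSt (leader s) b (shield s) (signal s) (dist s).
Definition set_signal (s : St) (b : bool) : St :=
  mkSt (leader s) (bullet s) (shield s) b (dist s).
Definition set_bss (s : St) (b : 'I_3) (sh sg : bool) : St :=
  mkSt (leader s) b sh sg (dist s).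

(* Transition function: initiator l, responder r; steps 1-7 executed in order. *)
Definition delta (l r : St) : St * St :=
  let l1 := if leader l then set_dist l (inord 0) else l in
  let r2 := if leader r then set_dist r (inord 0)
            else if nat_of_ord (bullet r) == 0 then
                   set_dist r (inord (minn (dist l1).+1 N))
            else r in
  let r3 := if nat_of_ord (dist r2) == N
            then mkSt true (inord 2) true false (inord 0) else r2 in
  let l4 := if leader l1 && signal l1 then set_bss l1 (inord 2) true false else l1 in
  let r5 := if leader r3 && signal r3 then set_bss r3 (inord 1) false false else r3 in
  let '(l6, r6) :=
    if (0 < bullet l4) && leader r5 then
      let r' := if (nat_of_ord (bullet l4) == 2) && ~~ shield r5
                then set_leader r5 false else r5 in
      (set_bullet l4 (inord 0), r')
    else if (0 < bullet l4) && ~~ leader r5 then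
      let r' := if nat_of_ord (bullet r5) == 0 then set_bullet r5 (bullet l4) else r5 in
      (set_bullet l4 (inord 0), set_signal r' false)
    else (l4, r5) in
  let l7 := set_signal l6 [|| signal l6, signal r6 | leader r6] in
  (l7, r6).

Variable n : nat.

Definition config := 'I_n -> St.

Definition rnext (i : 'I_n) : 'I_n := ordS i.
Definition rprev (i : 'I_n) : 'I_n := ord_pred i.

Definition interact (C : config) (i : 'I_n) : config :=
  fun k => if k == i then (delta (C i) (C (rnext i))).1
           else if k == rnext i then (delta (C i) (C (rnext i))).2
           else C k.

Definition step (C C' : config) : Prop := exists i, C' = interact C i.

Inductive reachable (C : config) : config -> Prop :=
| reach_refl : reachable C C
| reach_step : forall C' C'', reachable C C' -> step C' C'' -> reachable C C''.

Inductive output := OL | OF.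
Definition out (s : St) : output := if leader s then OL else OF.

Definition unique_leader (C : config) : Prop :=
  exists i, forall j, leader (C j) = (j == i).

Definition safe (C : config) : Prop :=
  unique_leader C /\
  forall C', reachable C C' -> forall i, out (C' i) = out (C i).

Definition back (j : nat) (i : 'I_n) : 'I_n := iter j rprev i.
Definition fwd (j : nat) (i : 'I_n) : 'I_n := iter j rnext i.

(* dist_L(i) = min {j >= 0 : u_{i-j} is a leader}; in a configuration with at
   least one leader this minimum is < n, hence found in iota 0 n. *)
Definition distL (C : config) (i : 'I_n) : nat :=
  find (fun j => leader (C (back j i))) (iota 0 n).
Definition distR (C : config) (i : 'I_n) : nat :=
  find (fun j => leader (C (fwd j i))) (iota 0 n).

Definition peaceful (C : config) (i : 'I_n) : Prop :=
  shield (C (back (distL C i) i)) /\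
  forall j, j <= distL C i -> signal (C (back j i)) = false.

Definition modest (C : config) (i : 'I_n) : Prop :=
  peaceful C i /\
  forall j, j <= distL C i -> dist (C (back j i)) <= distL C (back j i).

Definition secure (C : config) (i : 'I_n) : Prop :=
  if leader (C i) then nat_of_ord (dist (C i)) = 0
  else dist (C i) <= N - distR C i.

Definition has_leader (C : config) : Prop := exists i, leader (C i).

Definition C_PB (C : config) : Prop :=
  has_leader C /\ forall j, nat_of_ord (bullet (C j)) = 2 -> peaceful C j.

Definition C_NI (C : config) : Prop :=
  C_PB C /\ (forall i, secure C i) /\
  (forall j, nat_of_ord (bullet (C j)) = 2 -> modest C j).

Definition S_RL (C : config) : Prop := C_NI C /\ unique_leader C.

End Protocol.

From mathcomp Require Import all_boot zify.
Set Implicit Arguments. Unset Strict Implicit. Unset Printing Implicit Defensive.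

(* Read the ring from its unique leader l: the agent at offset e is u_{l+e}, so
   dist_L = e and dist_R = n - e, and membership in S_RL becomes a predicate
   [leader_view] on the sequence of states indexed by offset.  An interaction
   touches two consecutive offsets: (d, d+1) with d+1 < n, where the responder
   is a follower, or (n-1, 0), where it is the leader.  In both cases a finite
   case analysis of the transition function shows that the invariant survives:
   the secure bound keeps every follower's dist below N, so nobody promotes
   itself, and a 2-bullet only travels along a modest prefix, so when it
   reaches the leader the leader is shielded.  Thus leadership never changes
   along an execution from S_RL, which gives both closure and safety. *)

Section Ring.
Variable n : nat.
Implicit Types i k : 'I_n.

Lemma val_fwd e i : fwd e i = (i + e) %% n :> nat.
Proof.
elim: e => [|e IHe] /=; first by rewrite addn0 modn_small.
by rewrite /rnext /ordS /= IHe -addn1 modnDml addn1 addnS.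
Qed.

Lemma fwd_mod e i : fwd (e %% n) i = fwd e i.
Proof. by apply: val_inj => /=; rewrite !val_fwd modnDmr. Qed.

Lemma fwdD e e' i : fwd e (fwd e' i) = fwd (e + e') i.
Proof. by rewrite /fwd iterD. Qed.

Lemma fwd_eq e e' i : e < n -> e' < n -> (fwd e i == fwd e' i) = (e == e').
Proof.
move=> lt_e lt_e'; apply/eqP/eqP => [/(congr1 (@nat_of_ord _))|-> //].
by rewrite !val_fwd => /eqP; rewrite eqn_modDl !modn_small // => /eqP.
Qed.

Lemma fwd_eq0 e i : e < n -> (fwd e i == i) = (e == 0).
Proof.
by move=> lt_e; rewrite -[X in _ == X]/(fwd 0 i) fwd_eq // (leq_ltn_trans (leq0n e) lt_e).
Qed.

Lemma fwd_onto i k : exists2 e, e < n & k = fwd e i.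
Proof.
exists ((k + (n - i)) %% n); first by rewrite ltn_mod; case: n i => [[]|].
apply: val_inj => /=; rewrite val_fwd modnDmr.
have -> : i + (k + (n - i)) = k + n by have := ltn_ord i; lia.
by rewrite modnDr modn_small.
Qed.

Lemma back_fwd j e i : j <= e -> back j (fwd e i) = fwd (e - j) i.
Proof.
elim: j => [|j IHj] le_je; first by rewrite subn0.
rewrite /back iterS -/(back j _) IHj ?(ltnW le_je) //.
have -> : e - j = (e - j.+1).+1 by lia.
by rewrite /= /rprev ordSK.
Qed.

End Ring.

Lemma find_iota0 (P : pred nat) m e :
  e < m -> P e -> (forall j, j < e -> ~~ P j) -> find P (iota 0 m) = e.
Proof.
move=> lt_em Pe before_e.
have has_P : has P (iota 0 m) by apply/hasP; exists e; rewrite ?mem_iota.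
have := has_P; rewrite has_find size_iota => lt_find.
case: (ltngtP (find P (iota 0 m)) e) => // [lt_fe|lt_ef].
- by have := nth_find 0 has_P; rewrite nth_iota // add0n (negbTE (before_e _ lt_fe)).
- by have := before_find 0 lt_ef; rewrite nth_iota // add0n Pe.
Qed.

Section Distances.
Variables (N n : nat) (C : config N n) (l : 'I_n).
Hypothesis unique_l : forall k, leader (C k) = (k == l).

Lemma distL_fwd e : e < n -> distL C (fwd e l) = e.
Proof.
move=> lt_en; apply: find_iota0 => [||j lt_je] //=.
  by rewrite back_fwd // subnn unique_l.
by rewrite back_fwd ?(ltnW lt_je) // unique_l fwd_eq0; lia.
Qed.

Lemma distR_fwd e : 0 < e < n -> distR C (fwd e l) = n - e.
Proof.
move=> /andP[e_gt0 lt_en]; apply: find_iota0 => [||j lt_j] /=; first lia.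
  by rewrite fwdD subnK ?(ltnW lt_en) // -fwd_mod modnn unique_l.
by rewrite fwdD unique_l fwd_eq0; lia.
Qed.

End Distances.

Section Transition.
Variable N : nat.
Implicit Types l r : St N.

Lemma inord_minn k : nat_of_ord (@inord N (minn k N)) = minn k N.
Proof. by rewrite inordK // ltnS geq_minr. Qed.

Ltac destruct_state s := case: s => [? [? ?] ? ? ?] /=.

Ltac delta_branches :=
  rewrite /delta /= ?inord_minn ?inordK //=;
  repeat (case: ifP => /=; rewrite ?inord_minn ?inordK //=);
  intros; lia.

Ltac delta_cases l r := destruct_state l; destruct_state r; delta_branches.

(* What [modest] asks of the agent at offset [e] from the unique leader; the
   shield condition concerns the leader itself, at offset 0. *)
Definition modest_at (e : nat) (s : St N) : Prop :=
  signal s = false /\ dist s <= e /\ (e == 0 -> shield s).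

Definition arc_modest (d : nat) l r : Prop := modest_at d l /\ modest_at d.+1 r.

Lemma delta_leader1 l r : leader (delta l r).1 = leader l.
Proof. delta_cases l r. Qed.

Lemma delta_bullet1 l r : nat_of_ord (bullet (delta l r).1) = 0.
Proof. delta_cases l r. Qed.

Lemma delta_dist1 l r : nat_of_ord (dist (delta l r).1) = if leader l then 0 else dist l.
Proof. delta_cases l r. Qed.

Lemma delta_leader2_leader l r : ~~ leader l -> leader r ->
  (nat_of_ord (bullet l) = 2 -> shield r /\ signal r = false) -> leader (delta l r).2.
Proof. delta_cases l r. Qed.

Lemma delta_dist2_leader l r : leader r -> nat_of_ord (dist (delta l r).2) = 0.
Proof. delta_cases l r. Qed.

(* For N = 0 a leader responder restarts at step 3 with a fresh 2-bullet. *)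
Lemma delta_bullet2_leader l r : 0 < N -> leader r ->
  nat_of_ord (bullet (delta l r).2) = 2 -> nat_of_ord (bullet r) = 2.
Proof. delta_cases l r. Qed.

Lemma delta_modest2_leader l r : 0 < N -> leader r ->
  modest_at 0 r -> modest_at 0 (delta l r).2.
Proof. rewrite /modest_at; delta_cases l r. Qed.

Variable n : nat.

(* [secure] at offset [e] from the unique leader: there dist_R = n - e, so
   dist <= N - dist_R reads dist + n <= N + e. *)
Definition secure_at (e : nat) (s : St N) : Prop :=
  if e == 0 then nat_of_ord (dist s) = 0 else dist s + n <= N + e.

Definition inner_arc (d : nat) l r : Prop :=
  [/\ d.+1 < n, leader l = (d == 0), leader r = false, secure_at d l & secure_at d.+1 r].

Section InnerArc.
Variables (d : nat) (l r : St N).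
Hypotheses (n_le_N : n <= N) (arc : inner_arc d l r).

Ltac solve_inner :=
  move: n_le_N arc; rewrite /inner_arc /secure_at /arc_modest /modest_at;
  destruct_state l; destruct_state r; case: d => [|?] /= ? [? -> -> ? ?]; delta_branches.

Lemma inner_follower2 : leader (delta l r).2 = false.
Proof. solve_inner. Qed.

Lemma inner_secure2 : secure_at d.+1 (delta l r).2.
Proof. solve_inner. Qed.

Lemma inner_arc_modest : arc_modest d l r -> arc_modest d (delta l r).1 (delta l r).2.
Proof. solve_inner. Qed.

Lemma inner_bullet2_origin : nat_of_ord (bullet (delta l r).2) = 2 ->
  nat_of_ord (bullet r) != 2 -> nat_of_ord (bullet l) = 2 \/ d = 0.
Proof. solve_inner. Qed.

Lemma inner_new_bullet_modest : nat_of_ord (bullet (delta l r).2) = 2 ->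
  nat_of_ord (bullet r) != 2 -> (nat_of_ord (bullet l) = 2 -> modest_at d l) ->
  arc_modest d (delta l r).1 (delta l r).2.
Proof. solve_inner. Qed.

End InnerArc.
End Transition.

Section LeaderView.
Variables N n : nat.
Hypotheses (n_gt1 : 1 < n) (n_le_N : n <= N).
Implicit Types (g h : nat -> St N) (C : config N n) (l : 'I_n).

Definition modest_prefix g m : Prop := forall e, e <= m -> modest_at e (g e).

(* [S_RL] seen from the unique leader: [g e] is the state at offset [e]. *)
Definition leader_view g : Prop :=
  [/\ forall e, e < n -> leader (g e) = (e == 0),
      forall e, e < n -> secure_at n e (g e) &
      forall d, d < n -> nat_of_ord (bullet (g d)) = 2 -> modest_prefix g d].

Definition upd2 g i j (L R : St N) : nat -> St N :=
  fun e => if e == i then L else if e == j then R else g e.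

Definition interact_seq g i j : nat -> St N :=
  upd2 g i j (delta (g i) (g j)).1 (delta (g i) (g j)).2.

Lemma modest_prefix_upd2 g i j L R m :
  (forall e, e <= m -> e != i -> e != j -> modest_at e (g e)) ->
  (i <= m -> modest_at i L) -> (j <= m -> modest_at j R) ->
  modest_prefix (upd2 g i j L R) m.
Proof.
move=> modest_g modest_L modest_R e; rewrite /upd2.
case: eqVneq => [-> /modest_L // | ne_ei]; case: eqVneq => [-> /modest_R // | ne_ej le_em].
exact: modest_g.
Qed.

Lemma leader_view_ext g h : (forall e, e < n -> g e = h e) -> leader_view g -> leader_view h.
Proof.
move=> eq_gh [leaders secure bullets]; split=> [e lt_en | e lt_en | d lt_dn].
- by rewrite -eq_gh ?leaders.
- by rewrite -eq_gh //; exact: secure.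
- rewrite -eq_gh // => /(bullets _ lt_dn) prefix e le_ed.
  by rewrite -eq_gh; [exact: prefix | exact: leq_ltn_trans lt_dn].
Qed.

Section InnerStep.
Variables (g : nat -> St N) (d : nat).
Hypotheses (lt_d1n : d.+1 < n) (view_g : leader_view g).

Let leader_l : leader (g d) = (d == 0).
Proof. by case: view_g => leaders _ _; apply: leaders; exact: ltnW. Qed.

Let secure_l : secure_at n d (g d).
Proof. by case: view_g => _ secure _; apply: secure; exact: ltnW. Qed.

Let arc : inner_arc n d (g d) (g d.+1).
Proof.
have [leaders secure _] := view_g.
by split=> //; [rewrite leaders | exact: secure].
Qed.

Lemma modest_prefix_inner (m : nat) :
  m != d -> modest_prefix g m -> modest_prefix (interact_seq g d d.+1) m.
Proof.
move=> ne_md prefix.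
have arc_step : d < m -> arc_modest d (delta (g d) (g d.+1)).1 (delta (g d) (g d.+1)).2.
  by move=> lt_dm; apply: (inner_arc_modest n_le_N arc); split; apply: prefix; lia.
apply: modest_prefix_upd2 => [e le_em _ _ | le_dm | le_d1m]; first exact: prefix.
- by have [] := arc_step ltac:(lia).
- by have [] := arc_step le_d1m.
Qed.

Lemma leader_view_inner : leader_view (interact_seq g d d.+1).
Proof.
have [leaders secure bullets] := view_g.
split=> [e lt_en | e lt_en | d' lt_d'n]; rewrite {1}/interact_seq {1}/upd2.
- case: eqVneq => [-> | _]; first by rewrite delta_leader1 leader_l.
  case: eqVneq => [-> | _]; last exact: leaders.
  exact: (inner_follower2 n_le_N arc).
- case: eqVneq => [-> | _].
    by move: secure_l; rewrite /secure_at delta_dist1 leader_l; case: eqP.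
  case: eqVneq => [-> | _]; last exact: secure.
  exact: (inner_secure2 n_le_N arc).
- case: eqVneq => [-> | ne_d'd]; first by rewrite delta_bullet1.
  case: eqVneq => [-> armed_r' | ne_d'd1 armed]; last first.
    by apply: modest_prefix_inner => //; exact: bullets.
  have [armed_r | unarmed_r] := eqVneq (nat_of_ord (bullet (g d.+1))) 2.
    by apply: modest_prefix_inner; [lia | exact: bullets].
  have new_arc := inner_new_bullet_modest n_le_N arc armed_r' unarmed_r
    (fun armed_l => bullets d (ltnW lt_d1n) armed_l d (leqnn d)).
  have origin := inner_bullet2_origin n_le_N arc armed_r' unarmed_r.
  apply: modest_prefix_upd2 => [e le_ed1 ne_ed ne_ed1 | _ | _]; [|exact: new_arc.1|exact: new_arc.2].
  case: origin => [armed_l | d0]; last lia.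
  by apply: (bullets d (ltnW lt_d1n) armed_l); lia.
Qed.

End InnerStep.

Section WrapStep.
Variable g : nat -> St N.
Hypothesis view_g : leader_view g.

Let follower_l : leader (g n.-1) = false.
Proof. by case: view_g => leaders _ _; rewrite leaders; lia. Qed.

Let leader_r : leader (g 0).
Proof. by case: view_g => leaders _ _; rewrite leaders; lia. Qed.

Lemma modest_prefix_wrap m :
  m < n.-1 -> modest_prefix g m -> modest_prefix (interact_seq g n.-1 0) m.
Proof.
move=> lt_m prefix; apply: modest_prefix_upd2 => [e le_em _ _ | ? | _]; [exact: prefix | lia |].
apply: delta_modest2_leader => //; [lia | exact: prefix].
Qed.

Lemma leader_view_wrap : leader_view (interact_seq g n.-1 0).
Proof.
have [leaders secure bullets] := view_g.
split=> [e lt_en | e lt_en | d lt_dn]; rewrite {1}/interact_seq {1}/upd2.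
- case: eqVneq => [-> | _]; first by rewrite delta_leader1 follower_l; lia.
  case: eqVneq => [_ | ne_e0]; last by rewrite leaders // (negbTE ne_e0).
  apply: delta_leader2_leader => //; first by rewrite follower_l.
  move=> armed_l; have [signal_r [_ shield_r]] := bullets n.-1 ltac:(lia) armed_l 0 (leq0n _).
  by split => //; exact: shield_r.
- case: eqVneq => [-> | _].
    by move: (secure n.-1 ltac:(lia)); rewrite /secure_at delta_dist1 follower_l.
  case: eqVneq => [-> | _]; last exact: secure.
  by rewrite /secure_at delta_dist2_leader.
- case: eqVneq => [-> | ne_dn1]; first by rewrite delta_bullet1.
  move=> armed; apply: modest_prefix_wrap; first lia.
  apply: bullets => //; move: armed; case: eqVneq => [-> | _] //.
  apply: delta_bullet2_leader => //; lia.
Qed.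

End WrapStep.

Definition view C l : nat -> St N := fun e => C (fwd e l).

Lemma view_interact C l d e : d < n -> e < n ->
  view (interact C (fwd d l)) l e = interact_seq (view C l) d (d.+1 %% n) e.
Proof.
move=> lt_dn lt_en.
have next_d : rnext (fwd d l) = fwd (d.+1 %% n) l by rewrite fwd_mod.
by rewrite /view /interact /interact_seq /upd2 next_d !fwd_eq // ltn_pmod //; lia.
Qed.

Lemma leader_view_step C C' l :
  leader_view (view C l) -> step C C' -> leader_view (view C' l).
Proof.
move=> view_C [i ->]; have [d lt_dn ->] := fwd_onto l i.
apply: (@leader_view_ext (interact_seq (view C l) d (d.+1 %% n))) => [e lt_en|].
  by rewrite view_interact.
case: (ltngtP d.+1 n) => [lt_d1n | | eq_d1n]; [|lia|].
  by rewrite modn_small //; exact: leader_view_inner.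
have -> : d = n.-1 by lia.
by rewrite prednK // ?modnn; [exact: leader_view_wrap | lia].
Qed.

Lemma leader_view_reachable C C' l :
  leader_view (view C l) -> reachable C C' -> leader_view (view C' l).
Proof. by move=> view_C; elim=> // C1 C2 _ view_C1 /(leader_view_step view_C1). Qed.

Section UniqueLeader.
Variables (C : config N n) (l : 'I_n).
Hypothesis unique_l : forall k, leader (C k) = (k == l).

Lemma modest_fwd d : d < n -> modest C (fwd d l) <-> modest_prefix (view C l) d.
Proof.
move=> lt_dn; rewrite /modest /peaceful /modest_prefix /modest_at /view.
rewrite (distL_fwd unique_l) // back_fwd // subnn.
split=> [[[shield_l signal_off] dist_ok] e le_ed | prefix].
  have le_sub : d - e <= d by exact: leq_subr.
  move: (signal_off _ le_sub) (dist_ok _ le_sub).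
  rewrite back_fwd // subKn // (distL_fwd unique_l); last exact: leq_ltn_trans lt_dn.
  by move=> -> ->; split=> //; split=> // /eqP ->.
split; [split|] => [|j le_jd|j le_jd].
- by have [_ [_ ->]] := prefix 0 (leq0n _).
- by rewrite back_fwd //; have [] := prefix (d - j) (leq_subr _ _).
- rewrite back_fwd // (distL_fwd unique_l); last lia.
  by have [_ []] := prefix (d - j) (leq_subr _ _).
Qed.

Lemma secure_fwd e : e < n -> secure C (fwd e l) <-> secure_at n e (view C l e).
Proof.
move=> lt_en; rewrite /secure /secure_at /view unique_l fwd_eq0 //.
case: eqVneq => [-> // | ne_e0].
by rewrite (distR_fwd unique_l); lia.
Qed.

Lemma C_NI_leader_view : C_NI C <-> leader_view (view C l).
Proof.
split=> [[[_ _] [secure_C modest_C]] | [leaders secure_g bullets]].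
  split=> [e lt_en | e lt_en | d lt_dn armed].
  - by rewrite /view unique_l fwd_eq0.
  - exact/(secure_fwd lt_en).
  - exact/(modest_fwd lt_dn)/modest_C.
have modest_C j : nat_of_ord (bullet (C j)) = 2 -> modest C j.
  by have [d lt_dn ->] := fwd_onto l j => armed; apply/(modest_fwd lt_dn); exact: bullets.
split; [split | split].
- by exists l; rewrite unique_l.
- by move=> j /modest_C [].
- by move=> i; have [e lt_en ->] := fwd_onto l i; exact/(secure_fwd lt_en)/secure_g.
- exact: modest_C.
Qed.

End UniqueLeader.

Lemma leader_view_unique C l : leader_view (view C l) -> forall k, leader (C k) = (k == l).
Proof.
by case=> leaders _ _ k; have [e lt_en ->] := fwd_onto l k; rewrite fwd_eq0 //; exact: leaders.
Qed.

Lemma S_RL_leader_view C : S_RL C <-> exists l, leader_view (view C l).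
Proof.
split=> [[NI_C [l unique_l]] | [l view_C]].
  by exists l; apply/(C_NI_leader_view unique_l).
have unique_l := leader_view_unique view_C.
by split; [exact/(C_NI_leader_view unique_l) | exists l].
Qed.

End LeaderView.

Theorem lemma8 (N n : nat) (hn : 2 <= n) (hnN : n <= N) :
  (forall C C' : config N n, S_RL C -> reachable C C' -> S_RL C') /\
  (forall C : config N n, S_RL C -> safe C).
Proof.
have S_RL_iff := S_RL_leader_view hn hnN.
have reachable_view := leader_view_reachable hn hnN.
split=> [C C' /S_RL_iff [l view_C] reach_C' | C S_C].
  by apply/S_RL_iff; exists l; exact: reachable_view reach_C'.
split; first exact: S_C.2.
have [l view_C] := (S_RL_iff C).1 S_C.
move=> C' reach_C' i; have view_C' := reachable_view _ _ _ view_C reach_C'.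
by rewrite /out (leader_view_unique view_C') (leader_view_unique view_C).
Qed.
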